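(* Let $p$ be an obstacle and $(p_n)$ an approximating sequence as in the context. Let ${\boldsymbol v}\in C([0,T];{\boldsymbol W}_\sigma(\Omega))$ satisfy $|{\boldsymbol v}|\le p$ on $Q$ and $\operatorname{supp}({\boldsymbol v})\subset\{(x,t)\in\Omega\times[0,T]: p(x,t)\ge\delta\}$ for some $\delta>0$. Put $M=\delta+\sup_{(x,t)\in Q}|{\boldsymbol v}(x,t)|$ and $$\delta_n=\frac1\delta\max_{\operatorname{supp}({\boldsymbol v})}|\min\{p,M\}-\min\{p_n,M\}|,\quad n\in\mathbb N.$$ Then $\delta_n\to0$ as $n\to\infty$, and for every $n$, $(1-\delta_n)^+{\boldsymbol v}(t)\in K(p_n;t)$ for all $t\in[0,T]$.
   Context: $\Omega\subset\mathbb R^3$ is a bounded domain with smooth boundary, $0<T<\infty$, $Q=\Omega\times(0,T)$, $\overline Q$ its closure. ${\boldsymbol W}_\sigma(\Omega)$, ${\boldsymbol V}_\sigma(\Omega)$ are the closures of the smooth compactly supported divergence-free fields $\Omega\to\mathbb R^3$ in $W^{1,4}_0(\Omega)^3$ and $H^1_0(\Omega)^3$. $\operatorname{supp}$ denotes the closure of the set where a function is nonzero. Obstacle: $p:\overline Q\to[0,\infty]$ continuous as a map into the extended half-line $[0,\infty]$ (equivalently $p/(1+p)$, set to $1$ where $p=\infty$, is continuous). Approximating sequence: $p_n:\overline Q\to(0,\infty)$ Lipschitz, such that (a) for every $\kappa\in(0,\infty)$, $p_n\to p$ uniformly on $\{(x,t)\in\overline Q: p(x,t)\le\kappa\}$;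 (b) for every sufficiently large $M>0$ there is $n_M$ with $M\le p_n\le p$ on $\{(x,t)\in\overline Q:p(x,t)>M\}$ for all $n\ge n_M$. $K(p_n;t)=\{{\boldsymbol z}\in{\boldsymbol V}_\sigma(\Omega): |{\boldsymbol z}(x)|\le p_n(x,t)\text{ a.e.}\}$. $a^+=\max\{a,0\}$. *)

From HB Require Import structures.
From mathcomp Require Import all_boot all_order all_algebra.
From mathcomp Require Import all_classical all_reals all_analysis.
Set Implicit Arguments. Unset Strict Implicit. Unset Printing Implicit Defensive.
Import Order.TTheory GRing.Theory Num.Theory.
Import numFieldNormedType.Exports.
Local Open Scope classical_set_scope.
Local Open Scope ring_scope.

Definition R3 (R : realType) := ((R * R) * R)%type.

Definition comp3 {R : realType} (i : 'I_3) (x : R3 R) : R :=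
  if (i == 0 :> nat) then x.1.1 else if (i == 1 :> nat) then x.1.2 else x.2.
Definition e3 {R : realType} (i : 'I_3) : R3 R :=
  (((i == 0 :> nat)%:R, (i == 1 :> nat)%:R), (i == 2 :> nat)%:R).

Definition enorm {R : realType} (x : R3 R) : R :=
  Num.sqrt (\sum_(i < 3) comp3 i x ^+ 2).

Definition leb3 {R : realType} :=
  ((@lebesgue_measure R \x @lebesgue_measure R) \x @lebesgue_measure R)%E.

Definition LqO {R : realType} (A : set (R3 R)) (q : R) (f : R3 R -> R) : \bar R :=
  Lnorm (@leb3 R) q%:E (EFin \o (f \_ A)).

Definition dpart {R : realType} {V : normedModType R} (i : 'I_3)
  (f : R3 R -> V) : R3 R -> V := fun x => 'D_(e3 i) f x.
Fixpoint ipart {R : realType} {V : normedModType R} (s : seq 'I_3)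
  (f : R3 R -> V) : R3 R -> V :=
  match s with [::] => f | i :: s' => dpart i (ipart s' f) end.
Definition smooth {R : realType} {V : normedModType R} (f : R3 R -> V) : Prop :=
  forall s : seq 'I_3,
    continuous (ipart s f) /\ forall (i : 'I_3) (x : R3 R), derivable (ipart s f) x (e3 i).

(** bounded domain with smooth boundary (global smooth defining function) *)
Definition smooth_bounded_domain {R : realType} (Om : set (R3 R)) : Prop :=
  [/\ open Om, connected Om, Om !=set0,
      (exists r : R, forall x, Om x -> enorm x <= r) &
      exists rho : R3 R -> R^o, smooth rho /\ Om = [set x | rho x < 0] /\
        forall x, rho x = 0 -> exists i : 'I_3, dpart i rho x != 0].

Definition support3 {R : realType} (f : R3 R -> R3 R) : set (R3 R) :=
  closure [set x | f x != 0].

Definition test_sigma {R : realType} (Om : set (R3 R)) (phi : R3 R -> R3 R) : Prop :=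
  [/\ smooth phi, compact (support3 phi), support3 phi `<=` Om &
      forall x, \sum_(i < 3) comp3 i (dpart i phi x) = 0].

(** u lies in the closure of the fields satisfying P in W^{1,q}(Om)^3, with
    (weak) gradient G (G i = partial derivative in direction i) *)
Definition sob_grad {R : realType} (Om : set (R3 R)) (q : R)
  (P : (R3 R -> R3 R) -> Prop) (u : R3 R -> R3 R) (G : 'I_3 -> R3 R -> R3 R) : Prop :=
  (forall j : 'I_3, measurable_fun Om (comp3 j \o u)) /\
  (forall i j : 'I_3, measurable_fun Om (comp3 j \o G i)) /\
  exists phi : nat -> R3 R -> R3 R, (forall k, P (phi k)) /\
    forall j : 'I_3,
      (LqO Om q (fun x => comp3 j (phi k x - u x)) @[k --> \oo] --> 0%E) /\
      forall i : 'I_3,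
        (LqO Om q (fun x => comp3 j (dpart i (phi k) x - G i x)) @[k --> \oo] --> 0%E).

Definition sob_closure {R : realType} (Om : set (R3 R)) (q : R)
  (P : (R3 R -> R3 R) -> Prop) (u : R3 R -> R3 R) : Prop :=
  exists G, sob_grad Om q P u G.

Definition W_sigma {R : realType} (Om : set (R3 R)) := sob_closure Om 4 (test_sigma Om).
Definition V_sigma {R : realType} (Om : set (R3 R)) := sob_closure Om 2 (test_sigma Om).

Definition C_W_sigma {R : realType} (Om : set (R3 R)) (T : R) (v : R -> R3 R -> R3 R) : Prop :=
  exists G : R -> 'I_3 -> R3 R -> R3 R,
    (forall t, 0 <= t <= T -> sob_grad Om 4 (test_sigma Om) (v t) (G t)) /\
    forall t, 0 <= t <= T -> forall e : R, 0 < e -> exists d : R, 0 < d /\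
      forall s, 0 <= s <= T -> `|s - t| < d -> forall j : 'I_3,
        (LqO Om 4 (fun x => comp3 j (v s x - v t x)%R) <= e%:E)%E /\
        forall i : 'I_3, (LqO Om 4 (fun x => comp3 j (G s i x - G t i x)%R) <= e%:E)%E.

Definition Qset {R : realType} (Om : set (R3 R)) (T : R) : set (R3 R * R) :=
  Om `*` `]0, T[.
Definition Qbar {R : realType} (Om : set (R3 R)) (T : R) : set (R3 R * R) :=
  closure (Qset Om T).

Definition obstacle {R : realType} (Om : set (R3 R)) (T : R) (p : R3 R -> R -> \bar R) : Prop :=
  {within Qbar Om T, continuous (fun z : R3 R * R => p z.1 z.2)} /\
  forall z, Qbar Om T z -> (0 <= p z.1 z.2)%E.

Definition approx_seq {R : realType} (Om : set (R3 R)) (T : R) (p : R3 R -> R -> \bar R)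
  (pn : nat -> R3 R -> R -> R) : Prop :=
  [/\ (forall n z, Qbar Om T z -> 0 < pn n z.1 z.2),
      (forall n, exists L : R, forall z w, Qbar Om T z -> Qbar Om T w ->
          `|pn n z.1 z.2 - pn n w.1 w.2| <= L * (enorm (z.1 - w.1) + `|z.2 - w.2|)),
      (forall kappa : R, 0 < kappa -> forall e : R, 0 < e -> exists N : nat,
          forall n z, (N <= n)%N -> Qbar Om T z -> (p z.1 z.2 <= kappa%:E)%E ->
            (`|(pn n z.1 z.2)%:E - p z.1 z.2| <= e%:E)%E) &
      (exists M0 : R, forall M : R, M0 <= M -> 0 < M -> exists nM : nat,
          forall n z, (nM <= n)%N -> Qbar Om T z -> (M%:E < p z.1 z.2)%E ->
            M <= pn n z.1 z.2 /\ ((pn n z.1 z.2)%:E <= p z.1 z.2)%E)].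

Definition Kset {R : realType} (Om : set (R3 R)) (pn : R3 R -> R -> R) (t : R)
  (z : R3 R -> R3 R) : Prop :=
  V_sigma Om z /\ {ae @leb3 R, forall x, Om x -> enorm (z x) <= pn x t}.

Definition supp_v {R : realType} (Om : set (R3 R)) (T : R) (v : R -> R3 R -> R3 R) :
  set (R3 R * R) :=
  closure [set z | Om z.1 /\ 0 <= z.2 <= T /\ v z.2 z.1 != 0].

From HB Require Import structures.
From mathcomp Require Import all_boot all_order all_algebra.
From mathcomp Require Import all_classical all_reals all_analysis.
From mathcomp Require Import ring lra.
Import Order.TTheory GRing.Theory Num.Theory.
Import numFieldNormedType.Exports.
Local Open Scope classical_set_scope.
Local Open Scope ring_scope.

(** Since [0 <= (1 - delta_n)^+ <= 1], the shrunk field stays in [V_sigma]: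
    scaling preserves the divergence-free test fields, and on the bounded [Om]
    convergence in [L^4] forces convergence in [L^2].  For the pointwise bound put
    [a = min(p, M)] and [b = min(p_n, M)] on [supp v]; then [|v| <= a],
    [delta <= a] and [a - b <= delta delta_n], whence
    [(1 - delta_n) |v| <= a - delta_n a <= a - delta_n delta <= b <= p_n].
    Finally [delta_n -> 0]: below a level [K > M] the truncations converge
    uniformly by (a), since [min(_, M)] is 1-Lipschitz, while above [K] property
    (b) gives [p_n >= K], so both truncations equal [M]. *)

Section real_inequalities.
Context {R : realType}.
Implicit Types (a b d x M : R) (y : \bar R).

Lemma ler_dist_min a b M : `|Num.min a M - Num.min b M| <= `|a - b|.
Proof.
have h1 := ler_norm (a - b); have h2 : -(a - b) <= `|a - b| by rewrite -normrN ler_norm.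
by case: (leP a M) => aM; case: (leP b M) => bM; rewrite ler_norml; apply/andP; split; lra.
Qed.

Lemma fine_min_ge0_le y M : (0 <= y)%E -> 0 <= M -> 0 <= fine (Order.min y M%:E) <= M.
Proof.
case: y => [a||] //; rewrite ?lee_fin => a0 M0; last by rewrite minye /= M0 lexx.
by rewrite -EFin_min /= le_min a0 M0 ge_min lexx orbT.
Qed.

Lemma fine_min_ge y M b : (b%:E <= y)%E -> b <= M -> b <= fine (Order.min y M%:E).
Proof. by case: y => [a||] //; rewrite ?lee_fin => ba bM; rewrite -EFin_min /= le_min ba bM. Qed.

Lemma fine_min_idr y M : (M%:E <= y)%E -> fine (Order.min y M%:E) = M.
Proof. by move=> My; rewrite (min_idPr My). Qed.

Lemma max1B_mul_le a b d x delta : 0 <= x <= a -> delta <= a -> 0 <= d ->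
  a - b <= delta * d -> 0 <= b -> Num.max (1 - d) 0 * x <= b.
Proof.
move=> /andP[x0 xa] da d0 gap b0; have [_|d1] := leP (1 - d) 0; first by rewrite mul0r.
have h1 : 0 <= (1 - d) * (a - x) by apply: mulr_ge0; lra.
have h2 : 0 <= d * (a - delta) by apply: mulr_ge0; lra.
nra.
Qed.

Lemma le_sqr_AMGM (eps y : R) : 0 < eps ->
  y <= eps ^+ 2 / 2 + (2 * eps ^+ 2)^-1 * (y * y).
Proof.
move=> eps0; rewrite -subr_ge0.
have -> : eps ^+ 2 / 2 + (2 * eps ^+ 2)^-1 * (y * y) - y = (eps - y / eps) ^+ 2 / 2.
  by field; rewrite gt_eqF.
by rewrite divr_ge0 // sqr_ge0.
Qed.

End real_inequalities.

Section euclidean_norm.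
Context {R : realType}.
Implicit Types x y : R3 R.

Lemma enormE x : enorm x = Num.sqrt (x.1.1 ^+ 2 + x.1.2 ^+ 2 + x.2 ^+ 2).
Proof. by rewrite /enorm !big_ord_recr big_ord0 /= add0r /comp3 /=. Qed.

Lemma enorm_ge0 x : 0 <= enorm x.
Proof. exact: sqrtr_ge0. Qed.

Lemma enorm0 : enorm (0 : R3 R) = 0.
Proof. by rewrite enormE /= expr0n /= !addr0 sqrtr0. Qed.

Lemma enormZ (c : R) y : enorm (c *: y) = `|c| * enorm y.
Proof.
rewrite !enormE /= -sqrtr_sqr -sqrtrM ?sqr_ge0 //; congr Num.sqrt.
by rewrite !exprMn; ring.
Qed.

Lemma normr_coord_le_enorm x :
  [/\ `|x.1.1| <= enorm x, `|x.1.2| <= enorm x & `|x.2| <= enorm x].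
Proof.
have := sqr_ge0 x.1.1; have := sqr_ge0 x.1.2; have := sqr_ge0 x.2.
by rewrite enormE; split; rewrite -sqrtr_sqr ler_wsqrtr //; lra.
Qed.

Lemma continuous_enorm : continuous (@enorm R).
Proof.
have -> : @enorm R = fun x => Num.sqrt (x.1.1 ^+ 2 + x.1.2 ^+ 2 + x.2 ^+ 2).
  by apply/funext => x; rewrite enormE.
move=> x.
have sqr_coord (f : R3 R -> R) : {for x, continuous f} ->
    {for x, continuous (fun y => f y ^+ 2)}.
  move=> fc; exact: (@continuous_comp _ _ _ f (fun t : R => t ^+ 2) x fc
    (@exprn_continuous R 2 _)).
have fstC (U V : topologicalType) : continuous (@fst U V) by move=> [? ?]; exact: cvg_fst.
have sndC (U V : topologicalType) : continuous (@snd U V) by move=> [? ?]; exact: cvg_snd.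
have c11 := @continuous_comp _ _ _ fst fst x (fstC _ _ _) (fstC _ _ _).
have c12 := @continuous_comp _ _ _ fst snd x (fstC _ _ _) (sndC _ _ _).
have c2 : {for x, continuous (fun y : R3 R => y.2)} by apply: sndC.
have := continuousD (continuousD (sqr_coord _ c11) (sqr_coord _ c12)) (sqr_coord _ c2).
by move/(@continuous_comp _ _ _ _ Num.sqrt x); apply; apply: sqrt_continuous.
Qed.

End euclidean_norm.

Section closure_inequalities.
Context {T : topologicalType} {R : realType}.

Lemma le_on_closure (S : set T) (f : T -> R) (g : T -> \bar R) :
  {within closure S, continuous f} -> {within closure S, continuous g} ->
  (forall z, S z -> ((f z)%:E <= g z)%E) -> forall z, closure S z -> ((f z)%:E <= g z)%E.
Proof.
move=> /subspace_continuousP fc /subspace_continuousP gc fg z Sz.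
rewrite leNgt; apply/negP => gf.
have [r [gr rf]] : exists r : R, (g z < r%:E)%E /\ r < f z.
  move: gf; case: (g z) => [a||] //=.
  - by rewrite lte_fin => af; exists ((a + f z) / 2); rewrite lte_fin; split; lra.
  - by move=> _; exists (f z - 1); split; [rewrite ltNye|rewrite ltrBlDr ltrDl].
have Nf : nbhs z [set y | closure S y -> r < f y] := fc z Sz _ (lt_nbhsr rf).
have Ng : (g @ within (closure S) (nbhs z)) [set y | (y < r%:E)%E].
  apply: gc => //; apply: open_nbhs_nbhs; split => //.
  rewrite (_ : [set y | (y < r%:E)%E] = `]-oo, r%:E[%classic); first exact: lray_open.
  by apply/funext => y /=; rewrite in_itv.
have Ng' : nbhs z [set y | closure S y -> (g y < r%:E)%E] := Ng.
have Nfg : nbhs z [set y | closure S y -> r < f y /\ (g y < r%:E)%E].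
  by apply: filterS2 Nf Ng' => y fy gy Sy; split; [apply: fy|apply: gy].
have [y [Sy Ny]] := Sz _ Nfg.
have [ry yr] := Ny (subset_closure Sy).
by have := fg y Sy; rewrite leNgt => /negP; apply; rewrite (lt_trans yr) // lte_fin.
Qed.

Lemma continuous_compact_ubound (A : set T) (f : T -> R) :
  compact A -> {within A, continuous f} -> exists M, forall z, A z -> f z <= M.
Proof.
move=> cA cf; have [M [_ HM]] := compact_bounded (continuous_compact cf cA).
exists (M + 1) => z Az; apply: le_trans (ler_norm _) _.
by apply: HM; [rewrite ltrDl|exists z].
Qed.

End closure_inequalities.

Section space_time_cylinder.
Context {R : realType}.

Definition box (r : R) : set (R3 R) :=
  (`[-r, r]%classic `*` `[-r, r]%classic) `*` `[-r, r]%classic.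

Lemma measurable_box r : measurable (box r).
Proof. by apply: measurableX; [apply: measurableX|]; apply: measurable_itv. Qed.

Lemma leb3_box_fin_num r : @leb3 R (box r) \is a fin_num.
Proof.
have mI : measurable (`[-r, r]%classic : set R) by exact: measurable_itv.
have lebI_fin : (@lebesgue_measure R) `[-r, r]%classic \is a fin_num.
  by rewrite lebesgue_measure_itv /=; case: ifP.
rewrite /leb3 /box product_measure1E; [|exact: measurableX|exact: mI].
rewrite fin_numM //; have := fin_numM lebI_fin lebI_fin; by rewrite -product_measure1E.
Qed.

Lemma sub_box (A : set (R3 R)) r : (forall x, A x -> enorm x <= r) -> A `<=` box r.
Proof.
move=> Ar x /Ar xr; have [h1 h2 h3] := normr_coord_le_enorm x.
by rewrite /box /= !in_itv /= -!ler_norml !(le_trans _ xr).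
Qed.

Lemma itvcc_sub_closure_itvoo (a b : R) : a < b -> `[a, b] `<=` closure `]a, b[.
Proof.
move=> ab t; rewrite /= in_itv /= => /andP[at_ tb] B /nbhs_ballP [e e0 eB].
set l := Num.min (2^-1 : R) (e / (b - a)).
have ba0 : 0 < b - a by rewrite subr_gt0.
have l0 : 0 < l by rewrite lt_min invr_gt0 ltr0n divr_gt0.
have l1 : l <= 2^-1 by rewrite ge_min lexx.
have l2 : l * (b - a) <= e by rewrite -ler_pdivlMr // ge_min lexx orbT.
exists (t + l * ((a + b) / 2 - t)); split.
  rewrite /= in_itv /=; apply/andP; split; nra.
apply: eB; rewrite /ball /= ltr_distlC; apply/andP; split; nra.
Qed.

Variables (Om : set (R3 R)) (T : R).

Lemma mem_Qbar x t : 0 < T -> Om x -> 0 <= t <= T -> Qbar Om T (x, t).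
Proof.
move=> T0 Ox tT B nB.
have pairx : (fun s : R => (x, s)) @ t --> (x, t).
  exact: (@cvg_pair _ _ _ (nbhs t) (nbhs x) (nbhs t) _ _ _ (fun=> x) id (cvg_cst x) cvg_id).
have tQ : `[0, T]%classic t by rewrite /= in_itv.
by have [s [s0T Bs]] := @itvcc_sub_closure_itvoo 0 T T0 t tQ _ (pairx _ nB); exists (x, s).
Qed.

Lemma compact_Qbar r : (forall x, Om x -> enorm x <= r) -> compact (Qbar Om T).
Proof.
move=> Omr; set K : set (R3 R * R) := box r `*` `[0, T]%classic.
have cK : compact K.
  apply: compact_setX; last exact: segment_compact.
  by apply: compact_setX; [apply: compact_setX|]; exact: segment_compact.
have QK : Qset Om T `<=` K.
  move=> [x t] [/= Ox]; rewrite /= !in_itv /= => /andP[t0 tT]; split.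
    exact: sub_box Omr _ Ox.
  by rewrite /= in_itv /= !ltW.
have clK : closed K by apply: compact_closed => //; exact: norm_hausdorff.
apply: subclosed_compact cK _; first exact: closed_closure.
by rewrite [X in _ `<=` X](closure_id K).1 //; apply: closureS.
Qed.

End space_time_cylinder.

Section integral_sqr_bound.
Import HBNNSimple.
Local Open Scope ereal_scope.
Context {d} {X : measurableType d} {R : realType} {mu : {measure set X -> \bar R}}.

(* Integrating [f <= eps^2/2 1_B + f^2 / (2 eps^2)] through the simple functions below
   [f] (which is how the integral of a nonnegative function is defined): no
   measurability of [f] or [h] is needed. *)
Lemma integral_le_AMGM {B : set X} {m eps : R} {f h : X -> R} :
  measurable B -> mu B <= m%:E -> (0 < eps)%R ->
  (forall x, 0 <= f x)%R -> (forall x, ~ B x -> f x = 0%R) ->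
  (forall x, f x ^+ 2 <= h x)%R ->
  \int[mu]_x (f x)%:E <= (eps ^+ 2 / 2 * m)%:E + ((2 * eps ^+ 2)^-1)%:E * \int[mu]_x (h x)%:E.
Proof.
move=> mB muB eps0 f0 fB fh; have h0 x : (0 <= h x)%R by apply: le_trans (fh x); exact: sqr_ge0.
rewrite !ge0_integralTE => [|x|x]; rewrite ?lee_fin //.
apply: ge_ereal_sup => _ [s /= sf <-].
have sB x : ~ B x -> s x = 0%R.
  by move=> nB; apply/eqP; rewrite eq_le fun_ge0 andbT -lee_fin -(fB x nB) sf.
have k1 : (0 <= eps ^+ 2 / 2)%R by rewrite divr_ge0 // sqr_ge0.
have k2 : (0 <= (2 * eps ^+ 2)^-1)%R by rewrite invr_ge0 mulr_ge0 // sqr_ge0.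
pose s2 := mul_nnsfun s s.
pose g := add_nnsfun (scale_nnsfun (indic_nnsfun R mB) k1) (scale_nnsfun s2 k2).
have sg x : (s x <= g x)%R.
  rewrite /g /= /s2 /= /indic /= measurable_realfun.mindicE.
  case: (pselect (B x)) => Bx; last by rewrite sB // addr_ge0 // mulr_ge0.
  by rewrite (_ : (x \in B) = true) ?mulr1 ?le_sqr_AMGM //; apply/mem_set.
apply: le_trans (le_sintegral mu sg) _.
rewrite sintegralD /= !sintegralrM; apply: leeD.
  rewrite (eq_sintegral (\1_B)) // sintegral_indic (EFinM (eps ^+ 2 / 2)).
  by apply: lee_wpmul2l; rewrite ?lee_fin.
apply: lee_wpmul2l; first by rewrite lee_fin.
apply: ereal_sup_ubound; exists s2 => //= x.
have := sf x; rewrite !lee_fin => sxf; apply: le_trans (fh x).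
by rewrite expr2 ler_pM // fun_ge0.
Qed.

End integral_sqr_bound.

Lemma nneg_cvge0P {R : realType} (u : nat -> \bar R) : (forall k, 0 <= u k)%E ->
  u k @[k --> \oo] --> 0%E <-> forall e : R, 0 < e -> \forall k \near \oo, (u k <= e%:E)%E.
Proof.
move=> u0; split.
  move=> /fine_cvgP [uf uc] e e0.
  move/cvgrPdist_le : uc => /(_ e e0) ue; apply: filterS2 ue uf => k uke ufk.
  rewrite -(fineK ufk) lee_fin; move: uke; rewrite sub0r normrN /=.
  exact/le_trans/ler_norm.
have fin k e : (u k <= e%:E)%E -> u k \is a fin_num.
  by move=> uke; rewrite ge0_fin_numE ?(le_lt_trans uke) ?ltry.
move=> ue; apply/fine_cvgP; split; first by apply: filterS (ue 1 ltr01) => k; apply: fin.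
apply/cvgrPdist_le => e e0; apply: filterS (ue e e0) => k uke.
by rewrite sub0r normrN /= ger0_norm ?fine_ge0 // -lee_fin fineK // (fin k e).
Qed.

Section Lq_norms.
Context {R : realType}.
Implicit Types (A : set (R3 R)) (f : R3 R -> R).

Lemma LqOE A q f : LqO A q f = ((\int[@leb3 R]_x (`|f \_ A x| `^ q)%:E) `^ q^-1)%E.
Proof. by rewrite /LqO unlock /=; congr (_ `^ _)%E; apply: eq_integral. Qed.

Lemma LqO_ge0 A q f : (0 <= LqO A q f)%E.
Proof. by rewrite LqOE poweR_ge0. Qed.

Lemma LqO_le_powE A q f e : 0 < q -> 0 <= e ->
  (LqO A q f <= e%:E)%E = (\int[@leb3 R]_x (`|f \_ A x| `^ q)%:E <= (e `^ q)%:E)%E.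
Proof.
move=> q0 e0; rewrite LqOE; set a := (\int[_]_x _)%E.
have a0 : (0 <= a)%E by apply: integral_ge0 => x _; rewrite lee_fin powR_ge0.
have inI (y : \bar R) : (0 <= y)%E -> y \in `[0%E, +oo%E].
  by move=> y0; rewrite in_itv /= y0 leey.
have e0E : (0 <= e%:E)%E by rewrite lee_fin.
apply/idP/idP => ae.
  have -> : a = ((a `^ q^-1) `^ q)%E by rewrite -poweRrM mulVf ?poweRe1 // gt_eqF.
  rewrite -poweR_EFin; apply: gt0_ler_poweR => //.
  - exact: ltW.
  - exact: inI (poweR_ge0 _ _).
  - exact: inI.
have -> : e = (e `^ q) `^ q^-1 by rewrite -powRrM mulfV ?powRr1 // gt_eqF.
have eq0 : (0 <= (e `^ q)%:E)%E by rewrite lee_fin powR_ge0.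
rewrite -poweR_EFin; apply: gt0_ler_poweR => //.
- by rewrite invr_ge0 ltW.
- exact: inI.
- exact: inI.
Qed.

End Lq_norms.

Lemma LqO4_LqO2_scale_cvg0 {R : realType} {A B : set (R3 R)} {c : R}
    {g : nat -> R3 R -> R} :
  measurable B -> A `<=` B -> @leb3 R B \is a fin_num -> `|c| <= 1 ->
  LqO A 4 (g k) @[k --> \oo] --> 0%E ->
  LqO A 2 (fun x => c * g k x) @[k --> \oo] --> 0%E.
Proof.
move=> mB AB finB c1 /(nneg_cvge0P _ (fun k => LqO_ge0 _ _ _)) g4.
apply/(nneg_cvge0P _ (fun k => LqO_ge0 _ _ _)) => e e0.
set m := fine (@leb3 R B); have m0 : 0 <= m by rewrite fine_ge0.
have muB : (@leb3 R B <= m%:E)%E by rewrite fineK.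
set eps := e / (m + 1); have eps0 : 0 < eps by rewrite divr_gt0 // ltr_wpDl.
set eta := eps ^+ 2 * e ^+ 2; have eta0 : 0 < eta by rewrite mulr_gt0 // exprn_gt0.
have bound : eps ^+ 2 / 2 * m + (2 * eps ^+ 2)^-1 * eta <= e `^ 2.
  rewrite powR_mulrn ?(ltW e0) // (splitr (e ^+ 2)).
  have -> : (2 * eps ^+ 2)^-1 * eta = e ^+ 2 / 2 by rewrite /eta; field; rewrite gt_eqF.
  rewrite lerD2r mulrAC ler_pM2r ?invr_gt0 //.
  rewrite /eps expr_div_n mulrAC ler_pdivrMr ?exprn_gt0 ?ltr_wpDl // ler_pM2l ?exprn_gt0 //.
  nra.
have eta4 : 0 <= eta `^ 4^-1 by rewrite powR_ge0.
apply: filterS (g4 _ (powR_gt0 4^-1 eta0)) => k.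
rewrite LqO_le_powE // -powRrM mulVf ?powRr1 ?(ltW eta0) // => g4k.
rewrite LqO_le_powE ?(ltW e0) //.
set f := fun x => `|(fun x => c * g k x) \_ A x| `^ 2.
have f0 x : 0 <= f x by apply: powR_ge0.
have fB x : ~ B x -> f x = 0.
  move=> nB; rewrite /f patchE (_ : (x \in A) = false) ?normr0 ?powR0 //.
  by apply/negbTE/negP => /set_mem /AB.
have fh x : f x ^+ 2 <= `|g k \_ A x| `^ 4.
  rewrite /f !patchE; case: ifP => _; last by rewrite normr0 !powR0 // expr0n.
  rewrite !powR_mulrn ?normr_ge0 // -exprM normrM exprMn.
  by rewrite ler_piMl ?exprn_ge0 // exprn_ile1.
apply: le_trans (integral_le_AMGM (mu := @leb3 R) mB muB eps0 f0 fB fh) _.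
apply: le_trans (leeD2l _ (lee_wpmul2l _ g4k)) _.
  by rewrite lee_fin invr_ge0 mulr_ge0 // sqr_ge0.
by rewrite -EFinM -EFinD lee_fin; exact: bound.
Qed.

Section scaling.
Context {R : realType}.
Implicit Types (c : R) (phi : R3 R -> R3 R).

Lemma comp3Z c (y : R3 R) i : comp3 i (c *: y) = c * comp3 i y.
Proof. by rewrite /comp3; case: ifP => _ //; case: ifP. Qed.

Lemma ipartZ phi c s : smooth phi ->
  ipart s (fun x => c *: phi x) = (fun x => c *: ipart s phi x).
Proof.
move=> sm; elim: s => [//|i s IH] /=; apply/funext => x; rewrite /dpart IH.
by rewrite (_ : (fun x => c *: _) = c \*: ipart s phi) // deriveZ //; case: (sm s) => _; apply.
Qed.

Lemma smoothZ phi c : smooth phi -> smooth (fun x => c *: phi x).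
Proof.
move=> sm s; rewrite ipartZ //; have [cs ds] := sm s; split.
  by move=> x; apply: continuousZl_tmp; apply: cs.
by move=> i x; rewrite (_ : (fun x => c *: _) = c \*: ipart s phi) //; apply: derivableZ.
Qed.

Lemma test_sigmaZ (Om : set (R3 R)) phi c :
  test_sigma Om phi -> test_sigma Om (fun x => c *: phi x).
Proof.
case=> sm cp sO dv.
have sub : support3 (fun x => c *: phi x) `<=` support3 phi.
  by apply: closureS => x /=; apply: contra => /eqP ->; rewrite scaler0.
have dZ i : dpart i (fun x => c *: phi x) = (fun x => c *: dpart i phi x).
  exact: ipartZ phi c [:: i] sm.
split.
- exact: smoothZ.
- by apply: subclosed_compact cp sub; exact: closed_closure.
- exact: subset_trans sub sO.
- by move=> x; under eq_bigr do rewrite dZ comp3Z; rewrite -mulr_sumr dv mulr0.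
Qed.

Lemma sob_grad_scale {Om B : set (R3 R)} {c} {u : R3 R -> R3 R}
    {G : 'I_3 -> R3 R -> R3 R} :
  measurable B -> Om `<=` B -> @leb3 R B \is a fin_num -> `|c| <= 1 ->
  sob_grad Om 4 (test_sigma Om) u G ->
  sob_grad Om 2 (test_sigma Om) (fun x => c *: u x) (fun i x => c *: G i x).
Proof.
move=> mB OB finB c1 [u_meas [G_meas [phi [tphi cv]]]].
have comp3Zf (w : R3 R -> R3 R) j :
    comp3 j \o (fun x => c *: w x) = (fun x => c * comp3 j (w x)).
  by apply/funext => x /=; rewrite comp3Z.
split; [|split].
- move=> j; rewrite comp3Zf.
  exact: measurable_realfun.measurable_funM (measurable_cst c) (u_meas j).
- move=> i j; rewrite comp3Zf.
  exact: measurable_realfun.measurable_funM (measurable_cst c) (G_meas i j).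
exists (fun k x => c *: phi k x); split; first by move=> k; apply: test_sigmaZ.
move=> j; have [cu cg] := cv j; split.
  rewrite (_ : (fun k => _) = fun k => LqO Om 2 (fun x => c * comp3 j (phi k x - u x))).
    exact: LqO4_LqO2_scale_cvg0 mB OB finB c1 cu.
  by apply/funext => k; congr LqO; apply/funext => x; rewrite -scalerBr comp3Z.
move=> i; rewrite (_ : (fun k => _) =
    fun k => LqO Om 2 (fun x => c * comp3 j (dpart i (phi k) x - G i x))).
  exact: LqO4_LqO2_scale_cvg0 mB OB finB c1 (cg i).
apply/funext => k; have [smk _ _ _] := tphi k; congr LqO; apply/funext => x.
by rewrite (ipartZ (phi k) c [:: i] smk : dpart i _ = _) -scalerBr comp3Z.
Qed.

End scaling.

Section sup_image.
Context {T : Type} {R : realType} (D : set T) (f : T -> R).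

Lemma le_sup_image z : has_ubound (f @` D) -> D z -> f z <= sup (f @` D).
Proof. by move=> ub Dz; apply: ub_le_sup => //; exists z. Qed.

Lemma sup_image_ge0 : has_ubound (f @` D) -> (forall z, D z -> 0 <= f z) -> 0 <= sup (f @` D).
Proof.
move=> ub f0; have [[z Dz]|/set0P/negP/negPn/eqP D0] := pselect (D !=set0).
  exact: le_trans (f0 z Dz) (le_sup_image _ ub Dz).
by rewrite D0 image_set0 sup0.
Qed.

Lemma sup_image_le e : 0 <= e -> (forall z, D z -> f z <= e) -> sup (f @` D) <= e.
Proof.
move=> e0 fe; have [[z Dz]|/set0P/negP/negPn/eqP D0] := pselect (D !=set0).
  by apply: ge_sup; [exists (f z), z|move=> _ [y Dy <-]; apply: fe].
by rewrite D0 image_set0 sup0.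
Qed.

End sup_image.

Definition trunc_gap {R : realType} (p : R3 R -> R -> \bar R) (pn : R3 R -> R -> R)
  (M : R) (z : R3 R * R) : R :=
  `|fine (Order.min (p z.1 z.2) M%:E) - Order.min (pn z.1 z.2) M|.

Section truncation_gap.
Context {R : realType} {Om : set (R3 R)} {T : R} {p : R3 R -> R -> \bar R}
  {pn : nat -> R3 R -> R -> R}.
Hypotheses (p_ge0 : forall z, Qbar Om T z -> (0 <= p z.1 z.2)%E)
  (pn_approx : approx_seq Om T p pn).

Context {M : R}.
Hypothesis M_ge0 : 0 <= M.

Lemma trunc_gap_ge0_le n z : Qbar Om T z -> 0 <= trunc_gap p (pn n) M z <= M.
Proof.
move=> Qz; rewrite normr_ge0 ler_norml /=.
have /andP[a0 aM] := fine_min_ge0_le _ _ (p_ge0 z Qz) M_ge0.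
have [pn0 _ _ _] := pn_approx; have b0 := ltW (pn0 n z Qz).
have b0' : 0 <= Order.min (pn n z.1 z.2) M by rewrite le_min b0 M_ge0.
have bM : Order.min (pn n z.1 z.2) M <= M by rewrite ge_min lexx orbT.
by apply/andP; split; lra.
Qed.

Lemma has_ub_trunc_gap (D : set (R3 R * R)) n : D `<=` Qbar Om T ->
  has_ubound (trunc_gap p (pn n) M @` D).
Proof. by move=> DQ; exists M => _ [z /DQ Qz <-]; case/andP: (trunc_gap_ge0_le n _ Qz). Qed.

Lemma trunc_gap_unif_small e : 0 < e ->
  \forall n \near \oo, forall z, Qbar Om T z -> trunc_gap p (pn n) M z <= e.
Proof.
move=> e0; have [_ _ pn_low [M1 pn_high]] := pn_approx.
set K := Num.max M1 (M + 1).
have K0 : 0 < K by rewrite lt_max ltr_wpDl ?orbT.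
have MK : M < K by rewrite lt_max ltrDl ltr01 orbT.
have [nM HnM] := pn_high K ltac:(by rewrite le_max lexx) K0.
have [N HN] := pn_low K K0 e e0.
exists (maxn N nM) => // n /= n_ge z Qz.
have Nn : (N <= n)%N := leq_trans (leq_maxl _ _) n_ge.
have nMn : (nM <= n)%N := leq_trans (leq_maxr _ _) n_ge.
have [pK|Kp] := leP (p z.1 z.2) K%:E.
  have [a pa] : exists a, p z.1 z.2 = a%:E.
    by move: (p_ge0 z Qz) pK; case: (p z.1 z.2) => [a||] //; exists a.
  have := HN n z Nn Qz pK; rewrite /trunc_gap pa -EFin_min -EFinB abse_EFin lee_fin distrC.
  exact/le_trans/ler_dist_min.
have [Kpn _] := HnM n z nMn Qz Kp.
rewrite /trunc_gap fine_min_idr; last by rewrite (le_trans _ (ltW Kp)) // lee_fin ltW.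
by rewrite (min_idPr (le_trans (ltW MK) Kpn)) subrr normr0 ltW.
Qed.

Lemma sup_trunc_gap_cvg0 (D : set (R3 R * R)) : D `<=` Qbar Om T ->
  sup (trunc_gap p (pn n) M @` D) @[n --> \oo] --> 0.
Proof.
move=> DQ; apply/cvgrPdist_le => e e0; apply: filterS (trunc_gap_unif_small _ e0) => n gap.
rewrite sub0r normrN ger0_norm; last first.
  apply: sup_image_ge0 => [|z /DQ Qz]; first exact: has_ub_trunc_gap.
  by case/andP: (trunc_gap_ge0_le n _ Qz).
by apply: sup_image_le => [|z /DQ]; [exact: ltW|apply: gap].
Qed.

End truncation_gap.

Section shrunk_field.
Context {R : realType} {Om : set (R3 R)} {T : R} {p : R3 R -> R -> \bar R}
  {pn : nat -> R3 R -> R -> R} {v : R -> R3 R -> R3 R} {delta r : R}.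
Hypotheses (Om_bounded : forall x, Om x -> enorm x <= r) (T_gt0 : 0 < T)
  (p_obstacle : obstacle Om T p) (pn_approx : approx_seq Om T p pn)
  (v_cont : {within Qbar Om T, continuous (fun z : R3 R * R => v z.2 z.1)})
  (v_le_p : forall x t, Qset Om T (x, t) -> ((enorm (v t x))%:E <= p x t)%E)
  (delta_gt0 : 0 < delta)
  (supp_v_sub : supp_v Om T v `<=`
     [set z | Om z.1 /\ 0 <= z.2 <= T /\ (delta%:E <= p z.1 z.2)%E]).

Let normv (z : R3 R * R) := enorm (v z.2 z.1).
Let M := delta + sup (normv @` Qset Om T).
Let deltan n := delta^-1 * sup (trunc_gap p (pn n) M @` supp_v Om T v).

Let normv_cont : {within Qbar Om T, continuous normv}.
Proof. by apply: within_continuous_comp v_cont => z _; apply: continuous_enorm. Qed.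

Let has_ub_normv : has_ubound (normv @` Qset Om T).
Proof.
have [B normvB] := continuous_compact_ubound _ _ (compact_Qbar _ T _ Om_bounded) normv_cont.
by exists B => _ [z /subset_closure Qz <-]; apply: normvB.
Qed.

Lemma normv_le_sup z : Qbar Om T z -> normv z <= sup (normv @` Qset Om T).
Proof.
rewrite -lee_fin; move: z; apply: (le_on_closure (Qset Om T) normv) => //.
  exact: cst_continuous.
by move=> z Qz; rewrite lee_fin le_sup_image.
Qed.

Lemma normv_le_p z : Qbar Om T z -> ((normv z)%:E <= p z.1 z.2)%E.
Proof.
move: z; apply: (le_on_closure (Qset Om T) normv) => //; first exact: p_obstacle.1.
by move=> -[x t]; apply: v_le_p.
Qed.

Lemma delta_le_M : delta <= M.
Proof.
by rewrite lerDl; apply: sup_image_ge0 => [|z _]; [exact: has_ub_normv|exact: enorm_ge0].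
Qed.

Let supp_v_Qbar : supp_v Om T v `<=` Qbar Om T.
Proof. by move=> [x t] /supp_v_sub [/= Ox [tT _]]; apply: mem_Qbar. Qed.

Lemma deltan_ge0 n : 0 <= deltan n.
Proof.
have M0 := le_trans (ltW delta_gt0) delta_le_M.
apply: mulr_ge0; first by rewrite invr_ge0 ltW.
apply: sup_image_ge0 => [|z /supp_v_Qbar Qz].
  exact: (has_ub_trunc_gap p_obstacle.2 pn_approx M0 _ n supp_v_Qbar).
by case/andP: (trunc_gap_ge0_le p_obstacle.2 pn_approx M0 n _ Qz).
Qed.

Lemma deltan_cvg0 : deltan @ \oo --> 0.
Proof.
have M0 := le_trans (ltW delta_gt0) delta_le_M.
rewrite -(mulr0 delta^-1); apply: cvgMl_tmp.
exact: (sup_trunc_gap_cvg0 p_obstacle.2 pn_approx M0 _ supp_v_Qbar).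
Qed.

Lemma shrunk_enorm_le_pn n x t : Om x -> 0 <= t <= T ->
  Num.max (1 - deltan n) 0 * enorm (v t x) <= pn n x t.
Proof.
move=> Ox tT; have Qz : Qbar Om T (x, t) by apply: mem_Qbar.
have [pn0 _ _ _] := pn_approx; have pn_pos := pn0 n (x, t) Qz.
have [v0|vn0] := eqVneq (v t x) 0; first by rewrite v0 enorm0 mulr0 ltW.
have vsupp : supp_v Om T v (x, t) by apply: subset_closure.
have [_ [_ delta_le_p]] := supp_v_sub _ vsupp.
have M0 := le_trans (ltW delta_gt0) delta_le_M.
have v_le_M : normv (x, t) <= M.
  by rewrite (le_trans (normv_le_sup _ Qz)) // lerDr ltW.
have min_le_pn : Order.min (pn n x t) M <= pn n x t by rewrite ge_min lexx.
apply: le_trans min_le_pn; apply: (max1B_mul_le _ _ _ _ delta).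
- by rewrite enorm_ge0 /=; apply: fine_min_ge (normv_le_p _ Qz) v_le_M.
- exact: fine_min_ge delta_le_p delta_le_M.
- exact: deltan_ge0.
- rewrite /deltan mulrA divff ?gt_eqF // mul1r; apply: le_trans (ler_norm _) _.
  exact: le_sup_image (has_ub_trunc_gap p_obstacle.2 pn_approx M0 _ n supp_v_Qbar) vsupp.
- by rewrite le_min M0 ltW.
Qed.

End shrunk_field.

Theorem lemma2p3 (R : realType) (Om : set (R3 R)) (T : R)
  (p : R3 R -> R -> \bar R) (pn : nat -> R3 R -> R -> R)
  (v : R -> R3 R -> R3 R) (delta : R) :
  smooth_bounded_domain Om -> 0 < T ->
  obstacle Om T p -> approx_seq Om T p pn ->
  C_W_sigma Om T v ->
  {within Qbar Om T, continuous (fun z : R3 R * R => v z.2 z.1)} ->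
  (forall x t, Qset Om T (x, t) -> ((enorm (v t x))%:E <= p x t)%E) ->
  0 < delta ->
  supp_v Om T v `<=` [set z | Om z.1 /\ 0 <= z.2 <= T /\ (delta%:E <= p z.1 z.2)%E] ->
  let M := delta + sup [set enorm (v z.2 z.1) | z in Qset Om T] in
  let deltan := fun n : nat => delta^-1 *
    sup [set `|fine (Order.min (p z.1 z.2) M%:E) - Order.min (pn n z.1 z.2) M|
         | z in supp_v Om T v] in
  (deltan @ \oo --> 0) /\
  forall (n : nat) (t : R), 0 <= t <= T ->
    Kset Om (pn n) t (fun x => Num.max (1 - deltan n) 0 *: v t x).
Proof.
move=> [_ _ _ [r Om_r] _] T0 obs app [G [vG _]] vc vp d0 suppv M deltan.
split; first exact: (deltan_cvg0 Om_r).
move=> n t tT; set c := Num.max (1 - deltan n) 0.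
have dn0 : 0 <= deltan n by exact: (deltan_ge0 Om_r).
have c0 : 0 <= c by rewrite le_max lexx orbT.
have c1 : `|c| <= 1 by rewrite ger0_norm // ge_max ler01 andbT lerBlDr lerDl.
split.
  exists (fun i x => c *: G t i x).
  exact: sob_grad_scale (measurable_box r) (sub_box _ _ Om_r) (leb3_box_fin_num r) c1 (vG t tT).
apply: aeW => x Ox; rewrite enormZ ger0_norm //.
exact: (shrunk_enorm_le_pn Om_r).
Qed.
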